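(* Let $N\ge 1$ and $-\infty<a_i\le b_i<\infty$ with $r_i=(b_i-a_i)/2>0$ for all $i$; set $m_i=(a_i+b_i)/2$, $\Theta=\prod_{i=1}^N[a_i,b_i]$, $T(y)=\sum_{i=1}^N y_i$. Let $p$ be a sampling design with inclusion probabilities $\pi_i=\mathbb P_p(i\in S)>0$ for all $i$, and suppose $\mathbb P_p(i\in S,\ j\in S)=\pi_i\pi_j$ for every pair $i\ne j$. Then \[ \inf_{\delta}\sup_{y\in\Theta}R(\delta,p;y)=\sum_{i=1}^N r_i^2\,\frac{1-\pi_i}{\pi_i}, \] where the infimum is over all unbiased estimators, and the infimum is attained by $\widehat T(y_S)=\sum_{i=1}^N m_i+\sum_{i\in S}\frac{y_i-m_i}{\pi_i}$.
   Context: A sampling design is a probability distribution $p$ on the subsets $s\subseteq\{1,\dots,N\}$; $S$ denotes the random sample drawn from $p$, $\mathbb P_p$ and $\mathbb E_p$ denote probability and expectation with respect to $p$. An estimator $\delta$ is a collection of measurable functions $\delta_s:\Theta_s\to\mathbb R$, one for each subset $s$, where $\Theta_s=\prod_{i\in s}[a_i,b_i]$; for $y\in\Theta$ write $y_s=(y_i)_{i\in s}$. The estimator is unbiased if $\mathbb E_p[\delta_S(y_S)]=T(y)$ for all $y\in\Theta$. The risk is $R(\delta,p;y)=\mathbb E_p[(\delta_S(y_S)-T(y))^2]$. *)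

From HB Require Import structures.
From mathcomp Require Import all_boot all_order all_algebra.
From mathcomp Require Import all_classical all_reals.
From mathcomp Require Import ereal measure lebesgue_measure.
Set Implicit Arguments. Unset Strict Implicit. Unset Printing Implicit Defensive.
Import Order.TTheory GRing.Theory Num.Theory.
Local Open Scope classical_set_scope.
Local Open Scope ring_scope.

Section Sampling.
Variables (R : realType) (N : nat).

Definition is_design (p : {ffun {set 'I_N} -> R}) : Prop :=
  (forall s, 0 <= p s) /\ \sum_(s : {set 'I_N}) p s = 1.

Definition incl_prob (p : {ffun {set 'I_N} -> R}) (i : 'I_N) : R :=
  \sum_(s : {set 'I_N} | i \in s) p s.
Definition incl_prob2 (p : {ffun {set 'I_N} -> R}) (i j : 'I_N) : R :=
  \sum_(s : {set 'I_N} | (i \in s) && (j \in s)) p s.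

Definition Theta (a b : 'I_N -> R) : set ('I_N -> R) :=
  [set y | forall i, a i <= y i <= b i].

Definition total (y : 'I_N -> R) : R := \sum_i y i.

(* An estimator assigns to each sample s a function delta s of y, of which
   only the restriction to Theta and to the coordinates in s matters. *)
Definition estimator := {set 'I_N} -> ('I_N -> R) -> R.

Definition coord_gen (a b : 'I_N -> R) (s : {set 'I_N}) : set (set ('I_N -> R)) :=
  [set A | exists i, i \in s /\ exists B : set R,
      measurable B /\ A = Theta a b `&` (fun y => y i) @^-1` B].

(* delta_s is a measurable function on Theta_s, i.e. a (Borel) measurable
   function of y_s = (y_i)_{i in s}, for y in Theta. *)
Definition is_estimator (a b : 'I_N -> R) (delta : estimator) : Prop :=
  forall s : {set 'I_N},
    (forall y y', Theta a b y -> Theta a b y' ->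
       (forall i, i \in s -> y i = y' i) -> delta s y = delta s y') /\
    (forall B : set R, measurable B ->
       <<s Theta a b, coord_gen a b s >> (Theta a b `&` delta s @^-1` B)).

Definition expect (p : {ffun {set 'I_N} -> R}) (f : {set 'I_N} -> R) : R :=
  \sum_(s : {set 'I_N}) p s * f s.

Definition unbiased (a b : 'I_N -> R) (p : {ffun {set 'I_N} -> R})
  (delta : estimator) : Prop :=
  forall y, Theta a b y -> expect p (fun s => delta s y) = total y.

Definition risk (p : {ffun {set 'I_N} -> R}) (delta : estimator)
  (y : 'I_N -> R) : R :=
  expect p (fun s => (delta s y - total y) ^+ 2).

Definition max_risk (a b : 'I_N -> R) (p : {ffun {set 'I_N} -> R})
  (delta : estimator) : \bar R :=
  ereal_sup [set (risk p delta y)%:E | y in Theta a b].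

Definition minimax_risk (a b : 'I_N -> R) (p : {ffun {set 'I_N} -> R}) : \bar R :=
  ereal_inf [set max_risk a b p delta |
               delta in [set d | is_estimator a b d /\ unbiased a b p d]].

Definition That (a b : 'I_N -> R) (p : {ffun {set 'I_N} -> R}) : estimator :=
  fun s y => \sum_i ((a i + b i) / 2)
             + \sum_(i in s) (y i - (a i + b i) / 2) / incl_prob p i.

End Sampling.

From Pilot Require Import Defs.
From HB Require Import structures.
From mathcomp Require Import all_boot all_order all_algebra.
From mathcomp Require Import all_classical all_reals all_analysis.
From mathcomp Require Import ring lra.
Set Implicit Arguments. Unset Strict Implicit. Unset Printing Implicit Defensive.
Import Order.TTheory GRing.Theory Num.Theory.
Local Open Scope classical_set_scope.
Local Open Scope ring_scope.

(* Upper bound: That - T = sum_i (y_i - m_i) (1{i in S} / pi_i - 1), and pairwise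
   independence of the inclusions makes these centred weights uncorrelated, so the
   risk of That is sum_i (y_i - m_i)^2 (1 - pi_i) / pi_i, maximal at the vertices
   of Theta.
   Lower bound (without independence): average the risk of an unbiased delta over
   the 2^N vertices m + r * eps, eps in {-1, 1}^N.  For a fixed sample S, the
   coefficient of delta_S on the sign function eps_i vanishes when i is not in S,
   because delta_S does not see y_i, while unbiasedness fixes its mean to 2^N r_i.
   Bessel's inequality for the orthogonal sign functions, then Cauchy-Schwarz on
   the event {i in S}, bound the average risk below by
   sum_i r_i^2 (1 - pi_i) / pi_i, so some vertex has at least that risk. *)

Section TraceSigmaAlgebra.
Variables (T : Type) (D : set T) (G H : set (set T)).
Hypothesis traceGH : forall B, G B -> H (D `&` B).

Lemma g_sigma_trace A : <<s G >> A -> <<s D, H >> (D `&` A).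
Proof.
move=> GA.
have [H0 HD HU] : sigma_algebra D <<s D, H >> by exact: smallest_sigma_algebra.
pose C := [set A | <<s D, H >> (D `&` A)].
have sigmaC : sigma_algebra setT C.
  split; rewrite /C /=.
  - by rewrite setI0.
  - move=> B HB; rewrite setTD.
    have -> : D `&` ~` B = D `\` (D `&` B) by rewrite setDIr setDv set0U setDE.
    exact: HD.
  - by move=> F HF; rewrite setI_bigcupr; exact: HU.
apply: (smallest_sub sigmaC _ GA) => B GB.
by apply: sub_gen_smallest; exact: traceGH.
Qed.
End TraceSigmaAlgebra.

Lemma exists_ge_mean (R : realDomainType) (T : finType) (x0 : T) (f : T -> R) v :
  #|T|%:R * v <= \sum_x f x -> exists x, v <= f x.
Proof.
move=> le_sum; apply/existsP/negbNE/negP => /existsPn lt_v.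
suff : \sum_x f x < \sum_(x : T) v by rewrite sumr_const -mulr_natl ltNge le_sum.
apply: ltr_sum => [|x _]; first by apply/hasP; exists x0; rewrite ?mem_index_enum.
by rewrite ltNge lt_v.
Qed.

Section Hypercube.
Variables (R : realFieldType) (N : nat).
Local Notation cube := {ffun 'I_N -> bool}.
Local Notation K := (#|{: cube}|%:R : R).

Definition sign (e : cube) i : R := if e i then 1 else -1.

Definition flip i (e : cube) : cube := [ffun k => if k == i then ~~ e k else e k].

Lemma flipK i : involutive (flip i).
Proof.
by move=> e; apply/ffunP => k; rewrite !ffunE; case: eqP => // _; rewrite negbK.
Qed.

Lemma sign_flip i j e : sign (flip i e) j = if j == i then - sign e j else sign e j.
Proof. by rewrite /sign ffunE; case: eqP => _ //; case: (e j); rewrite ?opprK. Qed.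

Lemma sum_flip_odd i (h : cube -> R) :
  (forall e, h (flip i e) = - h e) -> \sum_e h e = 0.
Proof.
move=> hodd; have : \sum_e h e = - \sum_e h e.
  rewrite -sumrN (reindex_inj (can_inj (flipK i))).
  by apply: eq_bigr => e _; exact: hodd.
by move/eqP; rewrite -addr_eq0 -mulr2n mulrn_eq0 /= => /eqP.
Qed.

Lemma sum_mul_sign_flip_inv i (h : cube -> R) :
  (forall e, h (flip i e) = h e) -> \sum_e h e * sign e i = 0.
Proof.
by move=> hinv; apply: (@sum_flip_odd i) => e; rewrite hinv sign_flip eqxx mulrN.
Qed.

Lemma sum_sign i : \sum_e sign e i = 0.
Proof.
rewrite -[RHS](@sum_mul_sign_flip_inv i (fun=> 1)) //.
by apply: eq_bigr => e _; rewrite mul1r.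
Qed.

Lemma sum_sign_mul i j : \sum_e sign e i * sign e j = if i == j then K else 0.
Proof.
case: eqP => [<-|/eqP ij].
  rewrite -sumr_const; apply: eq_bigr => e _.
  by rewrite /sign; case: (e i); rewrite ?mulNr ?mul1r ?opprK.
apply: (@sum_mul_sign_flip_inv j (fun e => sign e i)) => e.
by rewrite sign_flip (negbTE ij).
Qed.

Lemma card_cube_gt0 : 0 < K.
Proof. by rewrite ltr0n; apply/card_gt0P; exists [ffun=> true]. Qed.

Lemma bessel_sign (g : cube -> R) :
  \sum_i (\sum_e g e * sign e i) ^+ 2 <= K * \sum_e g e ^+ 2.
Proof.
set c := fun i => \sum_e g e * sign e i.
set L := fun e => \sum_i c i * sign e i.
have gL : \sum_e g e * L e = \sum_i c i ^+ 2.
  transitivity (\sum_e \sum_i c i * (g e * sign e i)).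
    by apply: eq_bigr => e _; rewrite mulr_sumr; apply: eq_bigr => i _; ring.
  by rewrite exchange_big; apply: eq_bigr => i _; rewrite -mulr_sumr.
have LL : \sum_e L e ^+ 2 = K * \sum_i c i ^+ 2.
  transitivity (\sum_e \sum_i \sum_j c i * c j * (sign e i * sign e j)).
    apply: eq_bigr => e _; rewrite expr2 mulr_suml; apply: eq_bigr => i _.
    by rewrite mulr_sumr; apply: eq_bigr => j _; ring.
  rewrite exchange_big mulr_sumr; apply: eq_bigr => i _; rewrite exchange_big /=.
  under eq_bigr do rewrite -mulr_sumr sum_sign_mul.
  rewrite (bigD1 i) //= eqxx big1 ?addr0 => [|j /negbTE ji]; first ring.
  by rewrite eq_sym ji mulr0.
have : 0 <= \sum_e (K * g e - L e) ^+ 2 by apply: sumr_ge0 => e _; exact: sqr_ge0.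
have -> : \sum_e (K * g e - L e) ^+ 2 =
    K ^+ 2 * \sum_e g e ^+ 2 - 2 * K * \sum_e g e * L e + \sum_e L e ^+ 2.
  rewrite !mulr_sumr -sumrB -big_split /=; apply: eq_bigr => e _; ring.
rewrite gL LL => ge0.
have := card_cube_gt0; nra.
Qed.
End Hypercube.

Section Expectation.
Variables (R : realType) (N : nat) (p : {ffun {set 'I_N} -> R}).
Hypothesis p_sum1 : \sum_S p S = 1.

Lemma eq_expect f g : f =1 g -> expect p f = expect p g.
Proof. by move=> fg; apply: eq_bigr => S _; rewrite fg. Qed.

Lemma expectD f g : expect p (fun S => f S + g S) = expect p f + expect p g.
Proof. by rewrite /expect -big_split; apply: eq_bigr => S _; rewrite mulrDr. Qed.

Lemma expectZ k f : expect p (fun S => k * f S) = k * expect p f.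
Proof. by rewrite /expect mulr_sumr; apply: eq_bigr => S _; rewrite mulrCA. Qed.

Lemma expectB f g : expect p (fun S => f S - g S) = expect p f - expect p g.
Proof. by rewrite /expect -sumrB; apply: eq_bigr => S _; rewrite mulrBr. Qed.

Lemma expect_cst k : expect p (fun=> k) = k.
Proof. by rewrite /expect -mulr_suml p_sum1 mul1r. Qed.

Lemma expect_sum (I : finType) (F : I -> {set 'I_N} -> R) :
  expect p (fun S => \sum_k F k S) = \sum_k expect p (F k).
Proof.
by rewrite /expect; under eq_bigr do rewrite mulr_sumr; exact: exchange_big.
Qed.

Lemma expect_indicator (P : pred {set 'I_N}) k :
  expect p (fun S => if P S then k else 0) = k * \sum_(S | P S) p S.
Proof.
rewrite /expect [in RHS]big_mkcond mulr_sumr; apply: eq_bigr => S _.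
by case: (P S); rewrite ?mulr0 // mulrC.
Qed.

Hypothesis p_ge0 : forall S, 0 <= p S.

Lemma expect_ge0 f : (forall S, 0 <= f S) -> 0 <= expect p f.
Proof. by move=> f_ge0; apply: sumr_ge0 => S _; exact: mulr_ge0. Qed.

Lemma ler_expect f g : (forall S, f S <= g S) -> expect p f <= expect p g.
Proof. by move=> fg; apply: ler_sum => S _; exact: ler_wpM2l. Qed.

End Expectation.

(* Function types carry no canonical pointed structure, which
   [g_sigma_algebraType] requires; this alias supplies one. *)
Definition popvec (R : realType) (N : nat) := 'I_N -> R.
HB.instance Definition _ (R : realType) (N : nat) := Choice.on (popvec R N).
HB.instance Definition _ (R : realType) (N : nat) :=
  isPointed.Build (popvec R N) (fun=> 0).

Section Measurability.
Variables (R : realType) (N : nat) (a b : 'I_N -> R).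

Definition coord_sets (s : {set 'I_N}) : set (set (popvec R N)) :=
  [set A | exists i, i \in s /\ exists B : set R,
      measurable B /\ A = (fun y => y i) @^-1` B].

Local Notation sample_space s := (g_sigma_algebraType (coord_sets s)).

Lemma measurable_coord (s : {set 'I_N}) i : i \in s ->
  measurable_fun [set: sample_space s] (fun y => y i).
Proof.
move=> si _ B mB; rewrite setTI.
by apply: sub_gen_smallest; exists i; split => //; exists B.
Qed.

Lemma measurable_affine_sample (s : {set 'I_N}) c (m w : 'I_N -> R) :
  measurable_fun [set: sample_space s]
    (fun y => c + \sum_(i in s) (y i - m i) / w i).
Proof.
apply: measurable_realfun.measurable_funD; first exact: measurable_cst.
apply: (eq_measurable_fun
  (fun y : sample_space s => \sum_i if i \in s then (y i - m i) / w i else 0)).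
  by move=> y _; rewrite [RHS]big_mkcond.
apply: measurable_sum => i; have [si|_] := boolP (i \in s); last exact: measurable_cst.
apply: measurable_realfun.measurable_funM; last exact: measurable_cst.
apply: measurable_realfun.measurable_funD; last exact: measurable_cst.
exact: measurable_coord.
Qed.

Lemma is_estimator_affine c (m w : 'I_N -> R) :
  is_estimator a b (fun s y => c + \sum_(i in s) (y i - m i) / w i).
Proof.
move=> s; split=> [y y' _ _ yy'|B mB].
  by congr (_ + _); apply: eq_bigr => i si; rewrite yy'.
apply: (@g_sigma_trace _ _ (coord_sets s)).
  by move=> _ [i [si [B' [mB' ->]]]]; exists i; split => //; exists B'.
by have := @measurable_affine_sample s c m w measurableT B mB; rewrite setTI.
Qed.

End Measurability.

Lemma sqr_sub_midpoint_le (R : realFieldType) (a b y : R) :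
  a <= y <= b -> (y - (a + b) / 2) ^+ 2 <= ((b - a) / 2) ^+ 2.
Proof.
case/andP => ay yb; rewrite -subr_ge0.
have -> : ((b - a) / 2) ^+ 2 - (y - (a + b) / 2) ^+ 2 = (b - y) * (y - a) by field.
by apply: mulr_ge0; rewrite subr_ge0.
Qed.

Definition minimax_value (R : realType) (N : nat) (a b : 'I_N -> R)
    (p : {ffun {set 'I_N} -> R}) : R :=
  \sum_i ((b i - a i) / 2) ^+ 2 * ((1 - incl_prob p i) / incl_prob p i).

Section HorvitzThompson.
Variables (R : realType) (N : nat) (a b : 'I_N -> R) (p : {ffun {set 'I_N} -> R}).
Hypothesis p_sum1 : \sum_S p S = 1.
Hypothesis pi_gt0 : forall i, 0 < incl_prob p i.

Local Notation pi := (incl_prob p).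
Local Notation mid i := ((a i + b i) / 2).

Let pi_neq0 i : pi i != 0. Proof. by rewrite gt_eqF. Qed.

Definition ht_dev i (S : {set 'I_N}) : R := (if i \in S then (pi i)^-1 else 0) - 1.

Lemma That_sub_total S y :
  That a b p S y - Defs.total y = \sum_i (y i - mid i) * ht_dev i S.
Proof.
rewrite /That /Defs.total.
under [RHS]eq_bigr do rewrite /ht_dev mulrBr mulr1.
rewrite !sumrB (big_mkcond (mem S)) /=.
under [X in _ = X - _]eq_bigr do rewrite (fun_if (fun x => _ * x)) mulr0.
ring.
Qed.

Lemma expect_ht_dev i : expect p (fun S => ht_dev i S) = 0.
Proof. by rewrite expectB // expect_indicator expect_cst // mulVf ?subrr. Qed.

Lemma unbiased_That : unbiased a b p (That a b p).
Proof.
move=> y _; apply/eqP; rewrite -subr_eq0 -[X in _ - X](expect_cst p_sum1) -expectB.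
under eq_expect do rewrite That_sub_total.
rewrite expect_sum big1 // => i _.
by rewrite expectZ expect_ht_dev mulr0.
Qed.

Hypothesis pi2_indep : forall i j, i != j -> incl_prob2 p i j = pi i * pi j.

Lemma expect_ht_dev_mul i j :
  expect p (fun S => ht_dev i S * ht_dev j S) = if i == j then (1 - pi i) / pi i else 0.
Proof.
have -> : expect p (fun S => ht_dev i S * ht_dev j S) =
    expect p (fun S => (if (i \in S) && (j \in S) then (pi i)^-1 * (pi j)^-1 else 0)
                       - ht_dev i S - ht_dev j S - 1).
  by apply: eq_expect => S; rewrite /ht_dev; case: (i \in S); case: (j \in S) => /=; ring.
rewrite !expectB // !expect_indicator !expect_cst //.
rewrite -/(pi i) -/(pi j) -/(incl_prob2 p i j).
case: eqP => [<-|/eqP ij]; last by rewrite pi2_indep //; field; rewrite !pi_neq0.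
have -> : incl_prob2 p i i = pi i by apply: eq_bigl => S; rewrite andbb.
by field.
Qed.

Lemma risk_That y :
  risk p (That a b p) y = \sum_i (y i - mid i) ^+ 2 * ((1 - pi i) / pi i).
Proof.
transitivity (expect p (fun S => \sum_i \sum_j
    (y i - mid i) * (y j - mid j) * (ht_dev i S * ht_dev j S))).
  apply: eq_expect => S; rewrite That_sub_total expr2 mulr_suml.
  by apply: eq_bigr => i _; rewrite mulr_sumr; apply: eq_bigr => j _; ring.
rewrite expect_sum; apply: eq_bigr => i _; rewrite expect_sum.
under eq_bigr do rewrite expectZ expect_ht_dev_mul.
rewrite (bigD1 i) //= eqxx big1 ?addr0 => [|j /negbTE]; first by rewrite expr2.
by rewrite eq_sym => ->; rewrite mulr0.
Qed.

Hypothesis p_ge0 : forall S, 0 <= p S.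
Hypothesis a_le_b : forall i, a i <= b i.

Lemma incl_prob_le1 i : pi i <= 1.
Proof.
rewrite -p_sum1 /incl_prob big_mkcond /=.
by apply: ler_sum => S _; case: ifP.
Qed.

Lemma max_risk_That : max_risk a b p (That a b p) = (minimax_value a b p)%:E.
Proof.
apply/eqP; rewrite eq_le; apply/andP; split.
  apply: ge_ereal_sup => _ [y Ty <-]; rewrite lee_fin risk_That.
  apply: ler_sum => i _; apply: ler_wpM2r; last exact: sqr_sub_midpoint_le.
  by rewrite divr_ge0 ?subr_ge0 ?incl_prob_le1 ?ltW.
apply: ereal_sup_ubound; exists b; first by move=> i; rewrite lexx a_le_b.
rewrite risk_That; congr EFin; apply: eq_bigr => i _; congr (_ * _).
by congr (_ ^+ 2); field.
Qed.

End HorvitzThompson.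

Section LowerBound.
Variables (R : realType) (N : nat) (a b : 'I_N -> R) (p : {ffun {set 'I_N} -> R}).
Hypothesis a_le_b : forall i, a i <= b i.
Hypothesis p_ge0 : forall S, 0 <= p S.
Hypothesis p_sum1 : \sum_S p S = 1.
Hypothesis pi_gt0 : forall i, 0 < incl_prob p i.

Local Notation pi := (incl_prob p).
Local Notation cube := {ffun 'I_N -> bool}.
Local Notation K := (#|{: cube}|%:R : R).
Local Notation mid i := ((a i + b i) / 2).
Local Notation rad i := ((b i - a i) / 2).

(* Cauchy-Schwarz on the event [i \in S], of probability [pi i]. *)
Lemma expect_sqr_dev_supported_ge (i : 'I_N) (c : {set 'I_N} -> R) (m : R) :
  (forall S : {set 'I_N}, i \notin S -> c S = 0) -> expect p c = m ->
  m ^+ 2 * ((1 - pi i) / pi i) <= expect p (fun S => (c S - m) ^+ 2).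
Proof.
move=> c_out Ec.
have pi_neq0 : pi i != 0 by rewrite gt_eqF.
set q := m / pi i.
have Ec2 : m ^+ 2 / pi i <= expect p (fun S => c S ^+ 2).
  have : 0 <= expect p (fun S => if i \in S then (c S - q) ^+ 2 else 0).
    by apply: expect_ge0 => // S; case: ifP => _; rewrite ?sqr_ge0.
  have -> : expect p (fun S => if i \in S then (c S - q) ^+ 2 else 0) =
      expect p (fun S => c S ^+ 2 - 2 * q * c S + (if i \in S then q ^+ 2 else 0)).
    apply: eq_expect => S; have [iS|iS] := boolP (i \in S); first ring.
    by rewrite c_out //; ring.
  rewrite expectD // expectB // expectZ // expect_indicator Ec -/(pi i).
  have -> : q ^+ 2 * pi i = m * q by rewrite /q; field.
  by rewrite /q; lra.
have -> : expect p (fun S => (c S - m) ^+ 2) = expect p (fun S => c S ^+ 2) - m ^+ 2.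
  transitivity (expect p (fun S => c S ^+ 2 - (2 * m * c S - m ^+ 2))).
    by apply: eq_expect => S; ring.
  by rewrite !expectB // expectZ // expect_cst // Ec; ring.
have -> : m ^+ 2 * ((1 - pi i) / pi i) = m ^+ 2 / pi i - m ^+ 2 by field.
by rewrite lerD2r.
Qed.

Definition vertex (e : cube) : 'I_N -> R := fun i => if e i then b i else a i.

Lemma vertex_Theta e : Theta a b (vertex e).
Proof. by move=> i; rewrite /vertex; case: (e i); rewrite lexx a_le_b. Qed.

Lemma vertex_sign e i : vertex e i = mid i + rad i * sign R e i.
Proof. by rewrite /vertex /sign; case: (e i); field. Qed.

Lemma sum_total_vertex_sign i : \sum_e Defs.total (vertex e) * sign R e i = K * rad i.
Proof.
transitivity (\sum_j \sum_e (mid j * sign R e i + rad j * (sign R e j * sign R e i))).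
  rewrite exchange_big; apply: eq_bigr => e _; rewrite /Defs.total mulr_suml.
  by apply: eq_bigr => j _; rewrite vertex_sign; ring.
under eq_bigr do rewrite big_split /= -!mulr_sumr sum_sign sum_sign_mul mulr0 add0r.
rewrite (bigD1 i) //= eqxx big1 ?addr0 => [|j /negbTE ->]; last by rewrite mulr0.
by rewrite mulrC.
Qed.

Section UnbiasedEstimator.
Variable d : estimator R N.
Hypothesis d_local : forall (S : {set 'I_N}) y y', Theta a b y -> Theta a b y' ->
  (forall i, i \in S -> y i = y' i) -> d S y = d S y'.
Hypothesis d_unbiased : unbiased a b p d.

Definition vertex_coef S i := \sum_e d S (vertex e) * sign R e i.

Lemma vertex_coef_notin (S : {set 'I_N}) i : i \notin S -> vertex_coef S i = 0.
Proof.
move=> iS; apply: sum_mul_sign_flip_inv => e.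
apply: d_local; try exact: vertex_Theta.
move=> k kS; rewrite /vertex ffunE; case: eqP => // ki.
by move: iS; rewrite -ki kS.
Qed.

Lemma expect_vertex_coef i : expect p (vertex_coef^~ i) = K * rad i.
Proof.
rewrite -sum_total_vertex_sign /expect /vertex_coef.
under eq_bigr do rewrite mulr_sumr.
rewrite exchange_big; apply: eq_bigr => e _.
rewrite -(d_unbiased (vertex_Theta e)) /expect mulr_suml.
by apply: eq_bigr => S _; rewrite mulrA.
Qed.

Lemma sum_vertex_risk_ge : K * minimax_value a b p <= \sum_e risk p d (vertex e).
Proof.
pose g S e := d S (vertex e) - Defs.total (vertex e).
have coef_dev S i : vertex_coef S i - K * rad i = \sum_e g S e * sign R e i.
  rewrite /vertex_coef -sum_total_vertex_sign -sumrB.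
  by apply: eq_bigr => e _; rewrite mulrBl.
rewrite -(ler_pM2l (card_cube_gt0 R N)).
have -> : K * \sum_e risk p d (vertex e) = expect p (fun S => K * \sum_e g S e ^+ 2).
  by rewrite /risk -expect_sum // -expectZ.
apply: le_trans (ler_expect p_ge0 (fun S => bessel_sign (g S))).
rewrite expect_sum // /minimax_value mulrA mulr_sumr; apply: ler_sum => i _.
under eq_expect do rewrite -coef_dev.
rewrite -expr2 [leLHS]mulrA -exprMn.
apply: expect_sqr_dev_supported_ge => [S|]; first exact: vertex_coef_notin.
exact: expect_vertex_coef.
Qed.

End UnbiasedEstimator.

Lemma max_risk_ge d : is_estimator a b d -> unbiased a b p d ->
  ((minimax_value a b p)%:E <= max_risk a b p d)%E.
Proof.
move=> d_est d_unb.
have [e le_risk] := exists_ge_mean [ffun=> true]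
  (sum_vertex_risk_ge (fun S => (d_est S).1) d_unb).
have : ((risk p d (vertex e))%:E <= max_risk a b p d)%E.
  by apply: ereal_sup_ubound; exists (vertex e) => //; exact: vertex_Theta.
by apply: le_trans; rewrite lee_fin.
Qed.

End LowerBound.

Theorem proposition3 (R : realType) (N : nat) (a b : 'I_N -> R)
  (p : {ffun {set 'I_N} -> R}) :
  (0 < N)%N ->
  (forall i, a i <= b i) ->
  (forall i, 0 < (b i - a i) / 2) ->
  is_design p ->
  (forall i, 0 < incl_prob p i) ->
  (forall i j, i != j -> incl_prob2 p i j = incl_prob p i * incl_prob p j) ->
  minimax_risk a b p =
    (\sum_i ((b i - a i) / 2) ^+ 2 * ((1 - incl_prob p i) / incl_prob p i))%:E /\
  is_estimator a b (That a b p) /\ unbiased a b p (That a b p) /\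
  max_risk a b p (That a b p) =
    (\sum_i ((b i - a i) / 2) ^+ 2 * ((1 - incl_prob p i) / incl_prob p i))%:E.
Proof.
move=> _ a_le_b _ [p_ge0 p_sum1] pi_gt0 pi2_indep.
have That_est : is_estimator a b (That a b p) by exact: is_estimator_affine.
have That_unb : unbiased a b p (That a b p) by exact: unbiased_That.
have That_max := max_risk_That p_sum1 pi_gt0 pi2_indep p_ge0 a_le_b.
split=> //; apply/eqP; rewrite eq_le; apply/andP; split.
  by rewrite -That_max; apply: ereal_inf_lbound; exists (That a b p).
apply/ereal_infP => _ [d [d_est d_unb] <-].
exact: max_risk_ge.
Qed.
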